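(* Let $p$ be a prime, let $g:\mathbb{Z}_p\to[0,1]$ be any function, let $a_1,a_2,\dots,a_k\in\mathbb{Z}_p\setminus\{0\}$ be $k$ non-zero elements, and let $E\ge 0$ be an integer. Then at least one of the following two conclusions holds. (1) (Vanishing generalized balanced function.) There exists a function $h:\mathbb{Z}_p\to[-1,1]$ such that $h(n)\ge 0$ for every $n\in\mathrm{support}(g)$, $h(n)\le 0$ for every $n\notin\mathrm{support}(g)$, $\sum_{n\in\mathbb{Z}_p} h(n)=0$, $\|h\|_1=\sum_{n\in\mathbb{Z}_p}|h(n)|\ge E$, and $\hat h(a_1)=\hat h(a_2)=\cdots=\hat h(a_k)=0$. (2) (Generalized balanced function with small spectral support.) There exists a function $h:\mathbb{Z}_p\to\mathbb{R}$ with $$\mathrm{support}(\hat h)\subseteq\{0\}\cup\{a_1,\dots,a_k\}\cup\{-a_1,\dots,-a_k\},$$ such that, for all but at most $(2k+1)E$ elements $n\in\mathbb{Z}_p$, we have $h(n)>0$ if $n\in\mathrm{support}(g)$ and $h(n)<0$ if $n\notin\mathrm{support}(g)$.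
   Context: $\mathbb{Z}_p=\mathbb{Z}/p\mathbb{Z}$. For a function $f:\mathbb{Z}_p\to\mathbb{C}$, its Fourier transform is $\hat f(a)=\sum_{n\in\mathbb{Z}_p} f(n)\,\omega^{an}$ for $a\in\mathbb{Z}_p$, where $\omega=e^{2\pi i/p}$. For a function $f$, $\mathrm{support}(f)=\{x: f(x)\neq 0\}$, and $\mathrm{support}(g)^c=\mathbb{Z}_p\setminus\mathrm{support}(g)$. *)

From HB Require Import structures.
From mathcomp Require Import all_boot all_order all_algebra all_field.
Set Implicit Arguments. Unset Strict Implicit. Unset Printing Implicit Defensive.
Import Order.TTheory GRing.Theory Num.Theory.
Local Open Scope ring_scope.

(* omega = e^{2 pi i / p}: p.-root (-1) is the p-th root of -1 with minimal
   nonnegative argument, i.e. e^{i pi / p}; its square is e^{2 pi i / p}. *)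
Definition omega (C : numClosedFieldType) (p : nat) : C := (p.-root (-1)) ^+ 2.

Definition fourier (C : numClosedFieldType) (p : nat) (f : 'F_p -> C) (a : 'F_p) : C :=
  \sum_(n : 'F_p) f n * omega C p ^+ (val a * val n)%N.

From HB Require Import structures.
From mathcomp Require Import all_boot all_order all_algebra all_field.
From mathcomp Require Import lra.
Set Implicit Arguments. Unset Strict Implicit. Unset Printing Implicit Defensive.
Import Order.TTheory GRing.Theory Num.Theory.
Local Open Scope ring_scope.

(* The theorem is an instance of linear programming duality.  Call a real
   x : F_p -> [0,1] admissible when h = sgn * x (sgn = +1 on the support of g,
   -1 off it) has vanishing Fourier coefficients at every a i, and ask for an
   admissible x of total mass at least E.  These are finitely many real linear
   inequalities in the unknowns x n, once the conditions on the Fourier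
   coefficients are written with the real waves 1, Re fchar (a i) and
   Im fchar (a i).  By Farkas' lemma either
   - the program is feasible, and h = sgn * x is the vanishing generalized
     balanced function of the first alternative, or
   - a nonnegative combination of its rows is contradictory; the weights of
     the wave rows then define a real combination h of waves (so its spectrum
     lies in {0} and the +-a i), and the column relations of the certificate
     force sgn * h > 0 outside a set of fewer than E points. *)

Section RealSubfield.
Variable C : numClosedFieldType.

Definition creal := {x : C | x \is Num.real}.

HB.instance Definition _ := [isSub for (@sval C _ : creal -> C)].
HB.instance Definition _ := [Choice of creal by <:].
HB.instance Definition _ := [SubChoice_isSubComUnitRing of creal by <:].
HB.instance Definition _ := [SubComUnitRing_isSubIntegralDomain of creal by <:].
HB.instance Definition _ := [SubIntegralDomain_isSubField of creal by <:].

Let le_creal (x y : creal) := val x <= val y.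
Let lt_creal (x y : creal) := val x < val y.
Let norm_creal (x : creal) : creal := Sub `|val x| (normr_real (val x)).

Let le_creal0D x y : le_creal 0 x -> le_creal 0 y -> le_creal 0 (x + y).
Proof. exact: addr_ge0. Qed.
Let le_creal0M x y : le_creal 0 x -> le_creal 0 y -> le_creal 0 (x * y).
Proof. exact: mulr_ge0. Qed.
Let le_creal0_anti x : le_creal 0 x -> le_creal x 0 -> x = 0.
Proof. by move=> x_ge0 x_le0; apply/val_inj/eqP; rewrite eq_le; apply/andP. Qed.
Let subr_ge0_creal x y : le_creal 0 (y - x) = le_creal x y.
Proof. exact: subr_ge0. Qed.
Let le_creal0_total x : le_creal 0 x || le_creal x 0.
Proof. exact: (valP x). Qed.
Let normrN_creal x : norm_creal (- x) = norm_creal x.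
Proof. by apply: val_inj; rewrite /= normrN. Qed.
Let ger0_norm_creal x : le_creal 0 x -> norm_creal x = x.
Proof. by move=> x_ge0; apply: val_inj; exact: ger0_norm. Qed.
Let lt_def_creal x y : lt_creal x y = (y != x) && le_creal x y.
Proof. exact: lt_def. Qed.

HB.instance Definition _ := Num.IntegralDomain_isLeReal.Build creal
  le_creal0D le_creal0M le_creal0_anti subr_ge0_creal le_creal0_total
  normrN_creal ger0_norm_creal lt_def_creal.

Lemma ler_crealE (x y : creal) : (x <= y) = (val x <= val y). Proof. by []. Qed.
Lemma ltr_crealE (x y : creal) : (x < y) = (val x < val y). Proof. by []. Qed.

Definition creal_of (x : C) : creal := insubd 0 x.
Lemma creal_ofK x : x \is Num.real -> val (creal_of x) = x.
Proof. by move=> x_real; rewrite /creal_of insubdK. Qed.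

End RealSubfield.

Section FourierMotzkin.
Variable R : realFieldType.

Lemma sum_delta (I : finType) (i0 : I) (F : I -> R) :
  \sum_i (i == i0)%:R * F i = F i0.
Proof.
rewrite (bigD1 i0) //= eqxx mul1r big1 ?addr0 // => i /negbTE ->.
by rewrite mul0r.
Qed.

Lemma sum_comb (I J : finType) (y : J -> R) (M : J -> I -> R) (F : I -> R) :
  \sum_l (\sum_r y r * M r l) * F l = \sum_r y r * \sum_l M r l * F l.
Proof.
under eq_bigr do rewrite mulr_suml; rewrite exchange_big /=.
by apply: eq_bigr => r _; rewrite mulr_sumr; apply: eq_bigr => l _; rewrite mulrA.
Qed.

Lemma separating_point (ls us : seq R) :
  (forall l u, l \in ls -> u \in us -> l <= u) ->
  exists t, (forall l, l \in ls -> l <= t) /\ (forall u, u \in us -> t <= u).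
Proof.
elim: ls => [|l ls IH] ls_le_us.
  elim: us {ls_le_us} => [|u us [t [_ t_le_us]]]; first by exists 0.
  exists (Order.min t u); split => // v; rewrite inE => /predU1P[->|v_us].
    by rewrite ge_min lexx orbT.
  by rewrite ge_min t_le_us.
have [|t [ls_le_t t_le_us]] := IH.
  by move=> l' u l'_ls u_us; apply: ls_le_us => //; rewrite inE l'_ls orbT.
exists (Order.max l t); split.
  move=> v; rewrite inE => /predU1P[->|v_ls]; rewrite le_max ?lexx //.
  by rewrite ls_le_t ?orbT.
by move=> u u_us; rewrite ge_max t_le_us // andbT; apply: ls_le_us; rewrite ?inE ?eqxx.
Qed.

Lemma fm_solve_one (I : finType) (c s b : I -> R) :
  (forall i, c i = 0 -> s i <= b i) ->
  (forall i j, 0 < c i -> c j < 0 ->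
     - c j * s i + c i * s j <= - c j * b i + c i * b j) ->
  exists t, forall i, s i + c i * t <= b i.
Proof.
move=> zero_rows pair_rows.
pose ls := [seq (s j - b j) / - c j | j <- enum (fun j => c j < 0)].
pose us := [seq (b i - s i) / c i | i <- enum (fun i => 0 < c i)].
have [|t [ls_le_t t_le_us]] := @separating_point ls us.
  move=> l u /mapP[j]; rewrite mem_enum => cj_lt0 -> /mapP[i].
  rewrite mem_enum => ci_gt0 ->.
  have := pair_rows i j ci_gt0 cj_lt0.
  by rewrite ler_pdivrMr ?oppr_gt0 // mulrAC ler_pdivlMr // => pair_ij; lra.
exists t => i; case: (ltgtP (c i) 0) => ci.
- have i_neg : i \in enum (fun j => c j < 0) by rewrite mem_enum.
  have := ls_le_t _ (map_f (fun j => (s j - b j) / - c j) i_neg).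
  by rewrite ler_pdivrMr ?oppr_gt0 // => t_ge; lra.
- have i_pos : i \in enum (fun i => 0 < c i) by rewrite mem_enum.
  have := t_le_us _ (map_f (fun i => (b i - s i) / c i) i_pos).
  by rewrite ler_pdivlMr // => t_le; lra.
- by rewrite ci mul0r addr0; exact: zero_rows.
Qed.

(* Eliminating the unknown d from the system with rows A i : the new rows are the
   rows with A i d = 0, and the combinations -A j d * row i + A i d * row j for
   A i d > 0 > A j d; fm_coef r lists the weights of the old rows in row r. *)
Section Elimination.
Variables (I : finType) (V : Type) (A : I -> V -> R) (d : V).

Definition fm_coef (r : I + I * I) (l : I) : R :=
  match r with
  | inl i => if A i d == 0 then (l == i)%:R else 0
  | inr (i, j) => if (0 < A i d) && (A j d < 0)
                  then - A j d * (l == i)%:R + A i d * (l == j)%:R else 0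
  end.

Lemma fm_coef_ge0 r l : 0 <= fm_coef r l.
Proof.
case: r => [i|[i j]] /=; first by case: ifP => _; rewrite ?ler0n.
case: ifP => // /andP[Ai_gt0 Aj_lt0].
by apply: addr_ge0; apply: mulr_ge0; rewrite ?ler0n ?oppr_ge0 ?ltW.
Qed.

Lemma fm_combE r (F : I -> R) : \sum_l fm_coef r l * F l =
  match r with
  | inl i => if A i d == 0 then F i else 0
  | inr (i, j) => if (0 < A i d) && (A j d < 0)
                  then - A j d * F i + A i d * F j else 0
  end.
Proof.
case: r => [i|[i j]] /=.
  by case: ifP => _; rewrite ?sum_delta // big1 // => l _; rewrite mul0r.
case: ifP => _; last by rewrite big1 // => l _; rewrite mul0r.
rewrite -!sum_delta !mulr_sumr -big_split /=.
by apply: eq_bigr => l _; rewrite mulrDl !mulrA.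
Qed.

Lemma fm_comb_d r : \sum_l fm_coef r l * A l d = 0.
Proof.
rewrite fm_combE; case: r => [i|[i j]]; first by case: ifP => // /eqP.
by case: ifP => // _; rewrite mulNr mulrC addNr.
Qed.

End Elimination.

(* Farkas' lemma for systems of inequalities in the unknowns vs, proved by
   Fourier-Motzkin elimination: either A x <= b has a solution, or some
   nonnegative combination of the rows reads 0 <= (negative number). *)
Lemma farkas (V : eqType) (vs : seq V) : uniq vs ->
  forall (I : finType) (A : I -> V -> R) (b : I -> R),
  (exists x : V -> R, forall i, \sum_(v <- vs) A i v * x v <= b i) \/
  (exists y : I -> R, (forall i, 0 <= y i) /\
     (forall v, v \in vs -> \sum_i y i * A i v = 0) /\ \sum_i y i * b i < 0).
Proof.
elim: vs => [_ I A b|d vs IH /= /andP[dNvs vs_uniq] I A b].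
  have [b_ge0|/forallPn[i bi_lt0]] := boolP [forall i, 0 <= b i].
    by left; exists (fun=> 0) => i; rewrite big_nil; exact: (forallP b_ge0).
  right; exists (fun l => (l == i)%:R); split=> [l|]; first by rewrite ler0n.
  by split=> //; rewrite sum_delta ltNge.
pose A' r v := \sum_l fm_coef A d r l * A l v.
pose b' r := \sum_l fm_coef A d r l * b l.
have [[x' Ax'_le]|[y' [y'_ge0 [y'A' y'b']]]] := IH vs_uniq _ A' b'.
- pose s l := \sum_(v <- vs) A l v * x' v.
  have s_comb r : \sum_l fm_coef A d r l * s l <= b' r.
    apply: le_trans (Ax'_le r); rewrite le_eqVlt; apply/orP; left; apply/eqP.
    rewrite /s /A'; under eq_bigr do rewrite mulr_sumr.
    rewrite exchange_big /=; apply: eq_bigr => v _.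
    by rewrite mulr_suml; apply: eq_bigr => l _; rewrite mulrA.
  have [|i j Ai_gt0 Aj_lt0|t Ht] := @fm_solve_one _ (fun l => A l d) s b.
  + by move=> i Ai0; have := s_comb (inl i); rewrite /b' !fm_combE Ai0 eqxx.
  + by have := s_comb (inr (i, j)); rewrite /b' !fm_combE Ai_gt0 Aj_lt0.
  left; exists (fun v => if v == d then t else x' v) => i.
  rewrite big_cons eqxx addrC; congr (_ + _ <= _): (Ht i).
  rewrite /s !big_seq; apply: eq_bigr => v v_vs.
  by case: eqP v_vs => // ->; rewrite (negbTE dNvs).
- right; exists (fun l => \sum_r y' r * fm_coef A d r l); split.
    by move=> l; apply: sumr_ge0 => r _; apply: mulr_ge0; rewrite ?fm_coef_ge0.
  rewrite sum_comb; split=> [v|]; last by [].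
  rewrite inE sum_comb => /predU1P[->|v_vs]; last exact: y'A'.
  by rewrite big1 // => r _; rewrite fm_comb_d mulr0.
Qed.

End FourierMotzkin.

Section Characters.
Variables (C : numClosedFieldType) (p : nat).
Hypothesis p_prime : prime p.
Local Notation w := (omega C p).

Let p_gt0 : (0 < p)%N. Proof. exact: prime_gt0. Qed.

Lemma omega_prim : p.-primitive_root w.
Proof.
have w_p : w ^+ p = 1.
  by rewrite /omega -exprM mulnC exprM rootCK // sqrrN expr1n.
have w_neq1 : w != 1.
  rewrite /omega sqrf_eq1 negb_or; apply/andP; split; apply/eqP => w1.
    have := rootCK p_gt0 (-1 : C); rewrite w1 expr1n => /eqP.
    by rewrite -subr_eq0 opprK gt_eqF // addr_gt0 ?ltr01.
  by have := rootC_lt0 (-1 : C) (prime_gt1 p_prime); rewrite w1 ltrN10.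
have [m m_prim m_dvd_p] := prim_order_exists p_gt0 w_p.
case/primeP: p_prime => _ /(_ m m_dvd_p) /orP[/eqP m1|/eqP m_eq_p].
  move: m_prim; rewrite m1 => /prim_expr_order; rewrite expr1 => /eqP.
  by rewrite (negbTE w_neq1).
by move: m_prim; rewrite m_eq_p.
Qed.

Definition fchar (a n : 'F_p) : C := w ^+ (val a * val n).

Lemma fcharD (a c n : 'F_p) : fchar a n * fchar c n = fchar (a + c) n.
Proof.
have val_add : val (a + c) = ((val a + val c) %% p)%N.
  by rewrite /=; congr (_ %% _)%N; exact: Fp_cast.
rewrite /fchar val_add -[RHS](prim_expr_mod omega_prim) modnMml.
by rewrite (prim_expr_mod omega_prim) mulnDl exprD.
Qed.

Lemma fchar_conj (a n : 'F_p) : (fchar a n)^* = fchar (- a) n.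
Proof.
have norm_w : `|w| = 1.
  apply/eqP; rewrite -(pexpr_eq1 p_gt0) ?normr_ge0 //.
  by rewrite -normrX (prim_expr_order omega_prim) normr1.
have unit_char : fchar a n * (fchar a n)^* = 1.
  by rewrite -normCK /fchar normrX norm_w !expr1n.
have inv_char : fchar a n * fchar (- a) n = 1.
  by rewrite fcharD addrN /fchar mul0n expr0.
by rewrite -[LHS]mul1r -inv_char mulrAC unit_char mul1r.
Qed.

Lemma sum_fchar (a : 'F_p) : a != 0 -> \sum_n fchar a n = 0.
Proof.
move=> a_neq0; set z := w ^+ val a.
have -> : \sum_n fchar a n = \sum_(n : 'F_p) z ^+ val n.
  by apply: eq_bigr => n _; rewrite /fchar exprM.
have z_neq1 : z != 1.
  rewrite -(prim_order_dvd omega_prim); apply: contraTN isT => /(dvdn_leq _).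
  have a_gt0 : (0 < val a)%N.
    by rewrite lt0n; apply: contra_neq a_neq0 => a0; exact: val_inj.
  by move=> /(_ a_gt0); rewrite leqNgt -[X in (_ < X)%N](Fp_cast p_prime) ltn_ord.
have z_p : z ^+ p = 1.
  by rewrite /z -exprM mulnC exprM (prim_expr_order omega_prim) expr1n.
have := subrX1 z (Zp_trunc (pdiv p)).+2.
rewrite Fp_cast // z_p subrr.
by move/esym/eqP; rewrite mulf_eq0 subr_eq0 (negbTE z_neq1) => /eqP.
Qed.

Lemma fourierE (f : 'F_p -> C) (c : 'F_p) : fourier f c = \sum_n f n * fchar c n.
Proof. by []. Qed.

Lemma eq_fourier (f1 f2 : 'F_p -> C) (c : 'F_p) :
  f1 =1 f2 -> fourier f1 c = fourier f2 c.
Proof. by move=> f12; apply: eq_bigr => n _; rewrite f12. Qed.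

Lemma fourier_sum (J : finType) (lam : J -> C) (f : J -> 'F_p -> C) (c : 'F_p) :
  fourier (fun n => \sum_j lam j * f j n) c = \sum_j lam j * fourier (f j) c.
Proof.
rewrite !fourierE; under eq_bigr do rewrite mulr_suml.
rewrite exchange_big; apply: eq_bigr => j _; rewrite mulr_sumr.
by apply: eq_bigr => n _; rewrite mulrA.
Qed.

Lemma fourier_Re_fchar (a c : 'F_p) : c != a -> c != - a ->
  fourier (fun n => 'Re (fchar a n)) c = 0.
Proof.
move=> ca cNa; rewrite fourierE.
under eq_bigr do rewrite ReE fchar_conj mulrAC mulrDl !fcharD.
rewrite -mulr_suml big_split /= !sum_fchar ?addr0 ?mul0r //.
  by rewrite addrC subr_eq0.
by rewrite addrC addr_eq0.
Qed.

Lemma fourier_Im_fchar (a c : 'F_p) : c != a -> c != - a ->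
  fourier (fun n => 'Im (fchar a n)) c = 0.
Proof.
move=> ca cNa; rewrite fourierE.
under eq_bigr do rewrite ImE fchar_conj mulrAC -(mulrA 'i) mulrBl !fcharD.
rewrite -mulr_suml -mulr_sumr sumrB !sum_fchar ?subr0 ?mulr0 ?mul0r //.
  by rewrite addrC addr_eq0.
by rewrite addrC subr_eq0.
Qed.

End Characters.

Lemma card_mul_le_sum (R : numDomainType) (I : finType) (S : {set I})
    (Y : I -> R) (T : R) :
  (forall v, 0 <= Y v) -> (forall v, v \in S -> T <= Y v) ->
  #|S|%:R * T <= \sum_v Y v.
Proof.
move=> Y_ge0 Y_ge_T; rewrite mulr_natl -sumr_const [X in _ <= X](bigID (mem S)) /=.
rewrite -[X in X <= _]addr0; apply: lerD; first exact: ler_sum.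
by apply: sumr_ge0 => v _; exact: Y_ge0.
Qed.

Section BalancedFunctions.
Variables (C : numClosedFieldType) (p : nat).
Hypothesis p_prime : prime p.
Variables (g : 'F_p -> C) (k : nat) (a : 'I_k -> 'F_p) (E : nat).
Local Notation R := (creal C).
Local Notation J := (option ('I_k * bool)).

Definition vanishing_balanced (h : 'F_p -> C) : Prop :=
  (forall n, h n \is Num.real) /\
  (forall n, -1 <= h n <= 1) /\
  (forall n, g n != 0 -> 0 <= h n) /\
  (forall n, g n = 0 -> h n <= 0) /\
  \sum_n h n = 0 /\
  E%:R <= \sum_n `|h n| /\
  (forall i, fourier h (a i) = 0).

Definition spectral_balanced (h : 'F_p -> C) : Prop :=
  (forall n, h n \is Num.real) /\
  (forall b, fourier h b != 0 -> b = 0 \/ exists i, b = a i \/ b = - a i) /\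
  leq #|[set n | ~~ (if g n != 0 then 0 < h n else h n < 0)]| ((2 * k + 1) * E)%N.

Definition sgn (n : 'F_p) : R := if g n != 0 then 1 else -1.

(* Real functions spanning those with spectrum in {0} and the +-a i:
   the constant 1 and the real and imaginary parts of fchar (a i). *)
Definition wave (j : J) (n : 'F_p) : R :=
  match j with
  | None => 1
  | Some (i, true) => creal_of ('Re (fchar C (a i) n))
  | Some (i, false) => creal_of ('Im (fchar C (a i) n))
  end.

Lemma wave_comb_spectrum (lam : J -> R) (c : 'F_p) :
  fourier (fun n => val (\sum_j lam j * wave j n)) c != 0 ->
  c = 0 \/ exists i, c = a i \/ c = - a i.
Proof.
have [->|c_neq0] := eqVneq c 0; first by left.
case: (boolP [exists i, (c == a i) || (c == - a i)]).
  by case/existsP=> i /orP[]/eqP->; right; exists i; [left|right].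
move=> /existsPn c_off /negP[]; apply/eqP.
rewrite (@eq_fourier _ _ _ (fun n => \sum_j val (lam j) * val (wave j n))); last first.
  by move=> n; rewrite rmorph_sum; apply: eq_bigr => j _; rewrite rmorphM.
rewrite fourier_sum big1 // => j _; apply/eqP; rewrite mulf_eq0; apply/orP; right.
apply/eqP; case: j => [[i []]|] /=.
- have /norP[ca cNa] := c_off i.
  rewrite (@eq_fourier _ _ _ (fun n => 'Re (fchar C (a i) n))) ?fourier_Re_fchar //.
  by move=> n; rewrite creal_ofK ?Creal_Re.
- have /norP[ca cNa] := c_off i.
  rewrite (@eq_fourier _ _ _ (fun n => 'Im (fchar C (a i) n))) ?fourier_Im_fchar //.
  by move=> n; rewrite creal_ofK ?Creal_Im.
- by rewrite fourierE; under eq_bigr do rewrite mul1r; exact: sum_fchar.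
Qed.

(* The linear program behind the theorem: find x with 0 <= x <= 1 on F_p,
   \sum_v sgn v * wave j v * x v = 0 for every wave j, and \sum_v x v >= E.
   Rows are indexed by lp_row and have the form  \sum_v lp_mat r v * x v <= lp_rhs r. *)
Definition lp_row := (('F_p + 'F_p) + (J + J) + 'I_1)%type.
Definition row_upper n : lp_row := inl (inl (inl n)).
Definition row_lower n : lp_row := inl (inl (inr n)).
Definition row_pos j : lp_row := inl (inr (inl j)).
Definition row_neg j : lp_row := inl (inr (inr j)).
Definition row_mass : lp_row := inr ord0.

Definition lp_mat (r : lp_row) (v : 'F_p) : R :=
  match r with
  | inl (inl (inl n)) => (n == v)%:R
  | inl (inl (inr n)) => - (n == v)%:R
  | inl (inr (inl j)) => sgn v * wave j v
  | inl (inr (inr j)) => - (sgn v * wave j v)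
  | inr _ => -1
  end.

Definition lp_rhs (r : lp_row) : R :=
  match r with
  | inl (inl (inl _)) => 1
  | inl _ => 0
  | inr _ => - E%:R
  end.

Lemma lp_column (y : lp_row -> R) (v : 'F_p) :
  \sum_r y r * lp_mat r v = y (row_upper v) - y (row_lower v)
    + sgn v * \sum_j (y (row_pos j) - y (row_neg j)) * wave j v - y row_mass.
Proof.
rewrite !big_sumType /= big_ord1 mulrN1; congr (_ + _ - _).
  congr (_ + _); first by under eq_bigr do rewrite mulrC; rewrite sum_delta.
  by under eq_bigr do rewrite mulrN mulrC; rewrite sumrN sum_delta.
rewrite mulr_sumr -big_split /=; apply: eq_bigr => j _.
by rewrite mulrN -mulrBl mulrCA.
Qed.

Lemma lp_objective (y : lp_row -> R) :
  \sum_r y r * lp_rhs r = \sum_n y (row_upper n) - y row_mass * E%:R.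
Proof.
rewrite !big_sumType /= big_ord1 mulrN; congr (_ - _).
rewrite (eq_bigr _ (fun n _ => mulr1 _)) -[RHS]addr0 -addrA; congr (_ + _).
by rewrite !big1 ?addr0 // => *; rewrite mulr0.
Qed.

Lemma balanced_of_feasible (x : 'F_p -> R) :
  (forall r, \sum_v lp_mat r v * x v <= lp_rhs r) ->
  vanishing_balanced (fun n => val (sgn n * x n)).
Proof.
move=> x_feas.
have x_le1 n : x n <= 1.
  have := x_feas (row_upper n); rewrite /=; under eq_bigr do rewrite eq_sym.
  by rewrite sum_delta.
have x_ge0 n : 0 <= x n.
  have := x_feas (row_lower n); rewrite /=; under eq_bigr do rewrite mulNr eq_sym.
  by rewrite sumrN sum_delta oppr_le0.
have wave_orth j : \sum_v sgn v * wave j v * x v = 0.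
  apply/eqP; rewrite eq_le (x_feas (row_pos j)) /= -oppr_le0 -sumrN.
  by under eq_bigr do rewrite -mulNr; exact: (x_feas (row_neg j)).
have mass : E%:R <= \sum_v x v.
  have := x_feas row_mass; rewrite /=; under eq_bigr do rewrite mulN1r.
  by rewrite sumrN lerN2.
have sgn_abs n : `|val (sgn n * x n)| = val (x n).
  rewrite rmorphM normrM [`|val (x n)|]ger0_norm; last exact: x_ge0.
  by rewrite /sgn; case: ifP => _; rewrite ?rmorphN rmorph1 ?normrN normr1 mul1r.
split; first by move=> n; exact: valP.
split.
  move=> n; suff : -1 <= sgn n * x n <= 1 by rewrite !ler_crealE rmorphN rmorph1.
  by have := x_le1 n; have := x_ge0 n; rewrite /sgn; case: ifP => _; lra.
split.
  move=> n gn; suff : 0 <= sgn n * x n by rewrite ler_crealE rmorph0.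
  by rewrite /sgn gn mul1r.
split.
  move=> n /eqP gn; suff : sgn n * x n <= 0 by rewrite ler_crealE rmorph0.
  by rewrite /sgn gn mulN1r oppr_le0.
split.
  have sgn_orth : \sum_v sgn v * x v = 0.
    by rewrite -[RHS](wave_orth None); apply: eq_bigr => v _; rewrite mulr1.
  transitivity (val (\sum_n sgn n * x n)); last by rewrite sgn_orth rmorph0.
  by rewrite rmorph_sum.
split.
  under eq_bigr do rewrite sgn_abs.
  by move: mass; rewrite ler_crealE rmorph_sum rmorph_nat.
move=> i; rewrite fourierE.
have -> : \sum_n val (sgn n * x n) * fchar C (a i) n =
    val (\sum_n sgn n * wave (Some (i, true)) n * x n) +
    'i * val (\sum_n sgn n * wave (Some (i, false)) n * x n).
  rewrite !rmorph_sum mulr_sumr -big_split; apply: eq_bigr => n _.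
  rewrite !rmorphM /= !creal_ofK ?Creal_Re ?Creal_Im // {1}[fchar _ _ _]Crect.
  by rewrite mulrDr mulrAC; congr (_ + _); rewrite mulrCA mulrAC.
by rewrite !wave_orth rmorph0 mulr0 addr0.
Qed.

(* A Farkas certificate y of infeasibility yields the second alternative, for
   h = \sum_j lam j * wave j with lam j = y (row_pos j) - y (row_neg j): each
   column reads  y (row_upper v) = T - sgn v * h v + y (row_lower v)  with
   T = y row_mass > 0, so sgn * h <= 0 costs T in the objective, which is below
   T * E; hence sgn * h > 0 except on fewer than E (<= (2k+1) E) points. *)
Lemma spectral_of_certificate (y : lp_row -> R) :
  (forall r, 0 <= y r) -> (forall v, \sum_r y r * lp_mat r v = 0) ->
  \sum_r y r * lp_rhs r < 0 ->
  spectral_balanced (fun n => val (\sum_j (y (row_pos j) - y (row_neg j)) * wave j n)).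
Proof.
move=> y_ge0 y_col y_obj.
pose W n := \sum_j (y (row_pos j) - y (row_neg j)) * wave j n.
pose T := y row_mass.
have upperE v : y (row_upper v) = T - sgn v * W v + y (row_lower v).
  by have := y_col v; rewrite lp_column -/(W v) -/T; lra.
have upper_lt : \sum_n y (row_upper n) < T * E%:R.
  by move: y_obj; rewrite lp_objective -/T; lra.
have T_gt0 : 0 < T.
  rewrite lt_def y_ge0 andbT; apply/eqP => T0; move: upper_lt.
  by rewrite T0 mul0r ltNge sumr_ge0.
pose bad := [set v | sgn v * W v <= 0].
have bad_lt_E : (#|bad| < E)%N.
  rewrite -(ltr_nat R) -(ltr_pM2r T_gt0) [E%:R * T]mulrC; apply: le_lt_trans upper_lt.
  apply: card_mul_le_sum => [v|v]; first exact: y_ge0.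
  by rewrite inE upperE => sW_le0; have := y_ge0 (row_lower v); lra.
split; first by move=> n; exact: valP.
split; first exact: wave_comb_spectrum.
apply: leq_trans (ltnW (leq_trans bad_lt_E _)); last by rewrite leq_pmull // addn1.
apply: subset_leq_card; apply/subsetP => n; rewrite !inE /sgn; apply: contraR.
rewrite -ltNge -/(W n).
by case: ifP => _; rewrite ?mul1r ?mulN1r ?oppr_gt0 ltr_crealE rmorph0.
Qed.

End BalancedFunctions.

Theorem theorem1 (C : numClosedFieldType) (p : nat) (hp : prime p)
  (g : 'F_p -> C) (hg : forall n, 0 <= g n <= 1)
  (k : nat) (a : 'I_k -> 'F_p) (ha : forall i, a i != 0) (E : nat) :
  (exists h : 'F_p -> C,
      (forall n, h n \is Num.real) /\
      (forall n, -1 <= h n <= 1) /\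
      (forall n, g n != 0 -> 0 <= h n) /\
      (forall n, g n = 0 -> h n <= 0) /\
      \sum_(n : 'F_p) h n = 0 /\
      E%:R <= \sum_(n : 'F_p) `|h n| /\
      (forall i, fourier h (a i) = 0))
  \/
  (exists h : 'F_p -> C,
      (forall n, h n \is Num.real) /\
      (forall b, fourier h b != 0 -> b = 0 \/ exists i, b = a i \/ b = - a i) /\
      leq #|[set n : 'F_p | ~~ (if g n != 0 then 0 < h n else h n < 0)]|
         ((2 * k + 1) * E)%N).
Proof.
have [[x x_feasible]|[y [y_ge0 [y_columns y_negative]]]] :=
  farkas (index_enum_uniq 'F_p) (lp_mat g a) (lp_rhs C E).
- by left; eexists; exact: balanced_of_feasible x_feasible.
- right; eexists; apply: (spectral_of_certificate hp y_ge0 _ y_negative) => v.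
  exact: y_columns (mem_index_enum v).
Qed.
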